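(* Let $\mathbf{CTC}$ be the Core Tuplix Calculus over a nonempty attribute set $A$ and a non-trivial cancellation meadow $\mathcal{D}$ (defined in the context). Every $\mathbf{CTC}$ tuplix term $t$ is derivably equal in $\mathbf{CTC}$ to a canonical term, i.e. to a term of the form \[ \gamma(p_0)\oplus a_1(p_1)\oplus\cdots\oplus a_k(p_k)\oplus x_1\oplus\cdots\oplus x_l \] for some $k,l\ge 0$, data terms $p_0,\dots,p_k$, pairwise distinct attributes $a_1,\dots,a_k\in A$, and tuplix variables $x_1,\dots,x_l$.
   Context: Data: a meadow is a commutative ring with unit with a total unary operation $(\cdot)^{-1}$ satisfying $(u^{-1})^{-1}=u$ and $u\cdot(u\cdot u^{-1})=u$; a non-trivial cancellation meadow additionally satisfies $0\neq 1$ and the cancellation law ($u\neq 0$ and $uv=uw$ imply $v=w$). Fix such a structure $\mathcal{D}$. Data terms are built from data variables ($u,v,w,\dots$), constants $0,1$, binary $+,\cdot$ and unary $-$, $(\cdot)^{-1}$; write $p/q$ for $p\cdot q^{-1}$ and $p-q$ for $p+(-q)$. Fix a nonempty set $A$ of attributes. Tuplix terms are built from tuplix variables $x,y,z,\dots$, constants $\epsilon$ (empty tuplix) and $\delta$ (null tuplix), entries $a(p)$ ($a\in A$, $p$ a data term), zero tests $\gamma(p)$ ($p$ a data term), and the binary operator $\oplus$ (conjunctive composition). $\mathbf{CTC}$ is the two-sorted equational proof system with axioms (T1) $x\oplus y=y\oplus x$; (T2) $(x\oplus y)\oplus z=x\oplus(y\oplus z)$; (T3) $x\oplus\epsilon=x$;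 (T4) $x\oplus\delta=\delta$; (T5) $a(u)\oplus a(v)=a(u+v)$; (T6) $\gamma(u)=\gamma(u/u)$; (T7) $\gamma(0)=\epsilon$; (T8) $\gamma(1)=\delta$; (T9) $\gamma(u)\oplus\gamma(v)=\gamma(u/u+v/v)$; (T10) $\gamma(u-v)\oplus a(u)=\gamma(u-v)\oplus a(v)$ (for all $a\in A$), together with the rule (DE): for all data terms $p,q$, if $\mathcal{D}\models p=q$ then $\gamma(p)=\gamma(q)$ is derivable. *)

From HB Require Import structures.
From mathcomp Require Import all_boot all_algebra.
From Stdlib Require List.
Set Implicit Arguments. Unset Strict Implicit. Unset Printing Implicit Defensive.
Import GRing.Theory.
Local Open Scope ring_scope.

Definition meadow_inv (R : comNzRingType) (inv : R -> R) : Prop :=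
  (forall u : R, inv (inv u) = u) /\ (forall u : R, u * (u * inv u) = u).

(* Cancellation law (0 <> 1 is part of comNzRingType). *)
Definition cancellation (R : comNzRingType) : Prop :=
  forall u v w : R, u != 0 -> u * v = u * w -> v = w.

Inductive dterm : Type :=
| DVar : nat -> dterm
| D0 : dterm
| D1 : dterm
| DAdd : dterm -> dterm -> dterm
| DMul : dterm -> dterm -> dterm
| DOpp : dterm -> dterm
| DInv : dterm -> dterm.

Definition DDiv (p q : dterm) : dterm := DMul p (DInv q).
Definition DSub (p q : dterm) : dterm := DAdd p (DOpp q).

Fixpoint deval (R : comNzRingType) (inv : R -> R) (env : nat -> R) (p : dterm) : R :=
  match p with
  | DVar n => env n
  | D0 => 0
  | D1 => 1
  | DAdd p q => deval inv env p + deval inv env q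
  | DMul p q => deval inv env p * deval inv env q
  | DOpp p => - deval inv env p
  | DInv p => inv (deval inv env p)
  end.

Definition dvalid (R : comNzRingType) (inv : R -> R) (p q : dterm) : Prop :=
  forall env : nat -> R, deval inv env p = deval inv env q.

Inductive tterm (A : Type) : Type :=
| TVar : nat -> tterm A
| TEps : tterm A
| TDelta : tterm A
| TEntry : A -> dterm -> tterm A
| TGamma : dterm -> tterm A
| TPlus : tterm A -> tterm A -> tterm A.
Arguments TVar {A}. Arguments TEps {A}. Arguments TDelta {A}. Arguments TGamma {A}.

Inductive ctc (R : comNzRingType) (inv : R -> R) (A : Type) : tterm A -> tterm A -> Prop :=
| ctc_refl t : ctc inv t t
| ctc_sym t s : ctc inv t s -> ctc inv s t
| ctc_trans t s r : ctc inv t s -> ctc inv s r -> ctc inv t r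
| ctc_cong t1 t2 s1 s2 : ctc inv t1 s1 -> ctc inv t2 s2 ->
    ctc inv (TPlus t1 t2) (TPlus s1 s2)
| ctc_T1 x y : ctc inv (TPlus x y) (TPlus y x)
| ctc_T2 x y z : ctc inv (TPlus (TPlus x y) z) (TPlus x (TPlus y z))
| ctc_T3 x : ctc inv (TPlus x TEps) x
| ctc_T4 x : ctc inv (TPlus x TDelta) TDelta
| ctc_T5 (a : A) p q : ctc inv (TPlus (TEntry a p) (TEntry a q)) (TEntry a (DAdd p q))
| ctc_T6 p : ctc inv (TGamma p) (TGamma (DDiv p p))
| ctc_T7 : ctc inv (TGamma D0) TEps
| ctc_T8 : ctc inv (TGamma D1) TDelta
| ctc_T9 p q : ctc inv (TPlus (TGamma p) (TGamma q)) (TGamma (DAdd (DDiv p p) (DDiv q q)))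
| ctc_T10 p q (a : A) : ctc inv (TPlus (TGamma (DSub p q)) (TEntry a p))
                                (TPlus (TGamma (DSub p q)) (TEntry a q))
| ctc_DE p q : dvalid inv p q -> ctc inv (TGamma p) (TGamma q).

Fixpoint tsum (A : Type) (t : tterm A) (ss : list (tterm A)) : tterm A :=
  match ss with
  | nil => t
  | cons s ss' => TPlus t (tsum s ss')
  end.

Definition canon (A : Type) (p0 : dterm) (es : list (A * dterm)) (xs : list nat) : tterm A :=
  tsum (TGamma p0) (List.map (fun e => TEntry e.1 e.2) es ++ List.map (@TVar A) xs).

From HB Require Import structures.
From mathcomp Require Import all_boot all_algebra.
From Stdlib Require List.
From Stdlib Require Import Setoid Permutation Classical.
Local Open Scope ring_scope.

(* Atoms are canonical up to a [gamma(0) = eps]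
   summand (T7), and [delta = gamma(1)] (T8). Modulo T1-T3 the sum of two
   canonical terms is a multiset of summands; T9 merges its two zero tests into
   one, and T5 merges the entries of the second term one by one into those of
   the first whenever an attribute repeats. *)

Add Parametric Relation (R : comNzRingType) (inv : R -> R) (A : Type) :
  (tterm A) (@ctc R inv A)
  reflexivity proved by (@ctc_refl R inv A)
  symmetry proved by (@ctc_sym R inv A)
  transitivity proved by (@ctc_trans R inv A) as ctc_rel.

Add Parametric Morphism (R : comNzRingType) (inv : R -> R) (A : Type) :
  (@TPlus A) with signature @ctc R inv A ==> @ctc R inv A ==> @ctc R inv A as TPlus_ctc.
Proof. by move=> ? ? H ? ? K; apply: ctc_cong. Qed.

#[local] Hint Resolve ctc_refl : core.

Section Normalisation.
Variables (R : comNzRingType) (inv : R -> R) (A : Type).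
Local Notation ctc := (@ctc R inv A).

Lemma TPlus_epsl x : ctc (TPlus TEps x) x.
Proof. by rewrite ctc_T1 ctc_T3. Qed.

Lemma TPlus_gamma0l x : ctc (TPlus (TGamma D0) x) x.
Proof. by rewrite ctc_T7 TPlus_epsl. Qed.

Lemma TPlusACA x y z w :
  ctc (TPlus (TPlus x y) (TPlus z w)) (TPlus (TPlus x z) (TPlus y w)).
Proof. by rewrite !ctc_T2 -(ctc_T2 inv y) (ctc_T1 inv y z) ctc_T2. Qed.

Fixpoint lsum (l : list (tterm A)) : tterm A :=
  if l is s :: l' then TPlus s (lsum l') else TEps.

Definition entries (es : list (A * dterm)) : list (tterm A) :=
  map (fun e => TEntry e.1 e.2) es.

Definition vars (xs : list nat) : list (tterm A) := map TVar xs.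

Lemma tsum_lsum t ss : ctc (tsum t ss) (lsum (t :: ss)).
Proof.
elim: ss t => [|s ss IH] t /=; first by rewrite ctc_T3.
by rewrite IH.
Qed.

Lemma lsum_cat l1 l2 : ctc (lsum (l1 ++ l2)) (TPlus (lsum l1) (lsum l2)).
Proof.
elim: l1 => [|s l1 IH] /=; first by rewrite TPlus_epsl.
by rewrite IH ctc_T2.
Qed.

Lemma lsum_perm {l1 l2} : Permutation l1 l2 -> ctc (lsum l1) (lsum l2).
Proof.
elim=> [|s l l' _ IH|s s' l|l l' l'' _ IH1 _ IH2] /=.
- by [].
- by rewrite IH.
- by rewrite -!ctc_T2 (ctc_T1 inv s').
- by rewrite IH1 IH2.
Qed.

Lemma canon_lsum p0 es xs :
  ctc (canon p0 es xs) (TPlus (TGamma p0) (lsum (entries es ++ vars xs))).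
Proof. exact: tsum_lsum. Qed.

Lemma insert_entry {es} a q :
  List.NoDup (map fst es) ->
  exists gs, [/\ List.NoDup (map fst gs),
    List.incl (map fst gs) (a :: map fst es) &
    ctc (lsum (entries es ++ [:: TEntry a q])) (lsum (entries gs))].
Proof.
elim: es => [|[b p] es IH] /= es_uniq.
  by exists [:: (a, q)]; split => //; constructor; [case | constructor].
have /List.NoDup_cons_iff[b_notin es'_uniq] := es_uniq.
(* Equality on the bare type [A] is decided classically. *)
have [<-|neq_ba] := classic (b = a).
  exists ((b, DAdd p q) :: es); split => //.
    by move=> c /= [<-|in_c]; [left | right; right].
  have perm_q : Permutation (entries es ++ [:: TEntry b q]) (TEntry b q :: entries es).
    exact/Permutation_sym/Permutation_cons_append.
  by rewrite /= (lsum_perm perm_q) /= -ctc_T2 ctc_T5.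
have [gs [gs_uniq gs_keys gs_sum]] := IH es'_uniq.
exists ((b, p) :: gs); split => /=.
- constructor=> // in_b.
  by case: (gs_keys _ in_b) => [eq_ba|in_b']; [apply: neq_ba | apply: b_notin].
- move=> c [<-|in_c]; first by right; left.
  by case: (gs_keys _ in_c) => [<-|in_c']; [left | right; right].
- by rewrite gs_sum.
Qed.

Lemma merge_entries {es} fs :
  List.NoDup (map fst es) ->
  exists gs, List.NoDup (map fst gs) /\
    ctc (lsum (entries es ++ entries fs)) (lsum (entries gs)).
Proof.
elim: fs es => [|[a q] fs IH] es es_uniq; first by exists es; rewrite cats0.
have [gs [gs_uniq _ gs_sum]] := insert_entry a q es_uniq.
have [hs [hs_uniq hs_sum]] := IH gs gs_uniq.
exists hs; split => //.
have -> : entries es ++ entries ((a, q) :: fs)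
          = (entries es ++ [:: TEntry a q]) ++ entries fs by rewrite -catA.
by rewrite lsum_cat gs_sum -lsum_cat.
Qed.

Lemma canon_plus p0 es xs q0 fs ys :
  ctc (TPlus (canon p0 es xs) (canon q0 fs ys))
      (TPlus (TGamma (DAdd (DDiv p0 p0) (DDiv q0 q0)))
             (TPlus (lsum (entries es ++ entries fs)) (lsum (vars (xs ++ ys))))).
Proof.
have perm_summands : Permutation ((entries es ++ vars xs) ++ (entries fs ++ vars ys))
                                 ((entries es ++ entries fs) ++ (vars xs ++ vars ys)).
  rewrite -!catA; apply: Permutation_app_head.
  rewrite !catA; apply: Permutation_app_tail.
  exact: Permutation_app_comm.
rewrite !canon_lsum TPlusACA ctc_T9 -lsum_cat (lsum_perm perm_summands).
by rewrite lsum_cat /vars map_cat.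
Qed.

Definition canonizable (t : tterm A) : Prop :=
  exists p0 es xs, List.NoDup (map fst es) /\ ctc t (canon p0 es xs).

Lemma canonizable_plus s t :
  canonizable s -> canonizable t -> canonizable (TPlus s t).
Proof.
move=> [p0 [es [xs [es_uniq s_canon]]]] [q0 [fs [ys [_ t_canon]]]].
have [gs [gs_uniq gs_sum]] := merge_entries fs es_uniq.
exists (DAdd (DDiv p0 p0) (DDiv q0 q0)), gs, (xs ++ ys); split => //.
by rewrite s_canon t_canon canon_plus gs_sum -lsum_cat canon_lsum.
Qed.

End Normalisation.

Theorem lemma1 (A : Type) (HA : inhabited A)
  (R : comNzRingType) (inv : R -> R)
  (Hmeadow : meadow_inv inv) (Hcanc : cancellation R)
  (t : tterm A) :
  exists (p0 : dterm) (es : list (A * dterm)) (xs : list nat),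
    List.NoDup (List.map fst es) /\ ctc inv t (canon p0 es xs).
Proof.
elim: t => [n| | |a p|p|s s_canon t t_canon].
- exists D0, [::], [:: n]; split; first by constructor.
  by rewrite /canon /= TPlus_gamma0l.
- exists D0, [::], [::]; split; first by constructor.
  by rewrite /canon /= ctc_T7.
- exists D1, [::], [::]; split; first by constructor.
  by rewrite /canon /= ctc_T8.
- exists D0, [:: (a, p)], [::]; split; first by constructor; [case | constructor].
  by rewrite /canon /= TPlus_gamma0l.
- by exists p, [::], [::]; split; first constructor.
- exact: canonizable_plus.
Qed.
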